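(* Let $\mathcal{X}\subseteq\mathbb{R}^d$ be closed and convex, $p\ge2$, $\sigma>0$, and let $h:\mathcal{X}\to\mathbb{R}$ be convex, continuously differentiable and satisfy $D_h(x,y)\ge\frac{\sigma}{p}\|x-y\|^p$ for all $x,y\in\mathcal{X}$. Let $f:\mathcal{X}\to\mathbb{R}$ be convex and differentiable with minimizer $x^\ast$. Let $\delta>0$ and let $(A_k)_{k\ge0}$ be a nondecreasing sequence of positive numbers; set $\alpha_k=A_{k+1}-A_k$ and $\tau_k=\alpha_k/A_{k+1}$. Define $E_k=D_h(x^\ast,z_k)+A_k\big(f(y_k)-f(x^\ast)\big)$. (a) If sequences $(x_k),(y_k),(z_k)$ in $\mathcal{X}$ satisfy, for every $k$, $x_{k+1}=\tau_k z_k+(1-\tau_k)y_k$ and $\nabla h(z_{k+1})=\nabla h(z_k)-\alpha_k\nabla f(x_{k+1})$ (with $y_{k+1}\in\mathcal{X}$ arbitrary), then $$\frac{E_{k+1}-E_k}{\delta}\le\frac{p-1}{p}\sigma^{-\frac1{p-1}}\frac{(A_{k+1}-A_k)^{\frac p{p-1}}}{\delta}\|\nabla f(x_{k+1})\|^{\frac p{p-1}}+\frac{A_{k+1}}{\delta}\big(f(y_{k+1})-f(x_{k+1})\big).$$ (b) If instead they satisfy $x_{k+1}=\tau_k z_k+(1-\tau_k)y_k$ and $\nabla h(z_{k+1})=\nabla h(z_k)-\alpha_k\nabla f(y_{k+1})$ (with $y_{k+1}\in\mathcal{X}$ arbitrary), then $$\frac{E_{k+1}-E_k}{\delta}\le\frac{p-1}{p}\sigma^{-\frac1{p-1}}\frac{(A_{k+1}-A_k)^{\frac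 p{p-1}}}{\delta}\|\nabla f(y_{k+1})\|^{\frac p{p-1}}+\frac{A_{k+1}}{\delta}\langle\nabla f(y_{k+1}),y_{k+1}-x_{k+1}\rangle.$$
   Context: $\|\cdot\|$ is the Euclidean norm and $D_h(y,x)=h(y)-h(x)-\langle\nabla h(x),y-x\rangle$ is the Bregman divergence of $h$. *)

(* R : realType, R^d rendered as row vectors 'rV[R]_d. *)
From HB Require Import structures.
From mathcomp Require Import all_boot all_order all_algebra.
From mathcomp Require Import all_classical all_reals all_analysis.
Set Implicit Arguments. Unset Strict Implicit. Unset Printing Implicit Defensive.
Import Order.TTheory GRing.Theory Num.Theory.
Import numFieldNormedType.Exports.
Local Open Scope classical_set_scope.
Local Open Scope ring_scope.

Definition dotv {R : realType} {d : nat} (u v : 'rV[R]_d) : R :=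
  \sum_(i < d) u 0 i * v 0 i.
Definition enorm {R : realType} {d : nat} (v : 'rV[R]_d) : R :=
  Num.sqrt (dotv v v).

Definition convex_on {R : realType} {d : nat} (X : set 'rV[R]_d)
  (f : 'rV[R]_d -> R) : Prop :=
  forall x y (t : R), X x -> X y -> 0 <= t <= 1 ->
    f (t *: x + (1 - t) *: y) <= t * f x + (1 - t) * f y.

Definition has_gradient {R : realType} {d : nat} (f : 'rV[R]_d -> R)
  (g : 'rV[R]_d -> 'rV[R]_d) (x : 'rV[R]_d) : Prop :=
  differentiable f x /\ forall v, 'd f x v = dotv (g x) v.

Definition bregman {R : realType} {d : nat} (h : 'rV[R]_d -> R)
  (gh : 'rV[R]_d -> 'rV[R]_d) (y x : 'rV[R]_d) : R :=
  h y - h x - dotv (gh x) (y - x).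

From HB Require Import structures.
From mathcomp Require Import all_boot all_order all_algebra.
From mathcomp Require Import all_classical all_reals all_analysis.
From mathcomp Require Import ring lra.
Import Order.TTheory GRing.Theory Num.Theory.
Import numFieldNormedType.Exports.
Set Implicit Arguments. Unset Strict Implicit. Unset Printing Implicit Defensive.
Local Open Scope classical_set_scope.
Local Open Scope ring_scope.

(* Write [a = A_(k+1) - A_k] and [g] for the gradient of [f] used in the mirror
   step. The three-point identity turns [D_h(x*, z_(k+1)) - D_h(x*, z_k)] into
   [a <g, x* - z_(k+1)> - D_h(z_(k+1), z_k)]. Splitting off [a <g, z_k - z_(k+1)>],
   Cauchy-Schwarz, the uniform convexity [D_h >= sigma/p |.|^p] and Young's
   inequality bound it by the [(a |g|)^(p/(p-1))] term. The coupling
   [A_(k+1) x_(k+1) = a z_k + A_k y_k] rewrites the remaining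
   [a <g, x* - z_k>] as [a <g, x* - x_(k+1)> + A_k <g, y_k - x_(k+1)>], and the
   gradient inequality of the convex [f] at the point [w] where [g] is taken
   ([w = x_(k+1)] in (a), [w = y_(k+1)] in (b)) trades these for function
   values; the [f(x* )] and [f(y_k)] terms of the energy then cancel. *)

Section Dotv.
Variables (R : realType) (d : nat).
Implicit Types u v w : 'rV[R]_d.

Lemma dotvC u v : dotv u v = dotv v u.
Proof. by apply: eq_bigr => i _; rewrite mulrC. Qed.

Lemma dotvDl u v w : dotv (u + v) w = dotv u w + dotv v w.
Proof. by rewrite /dotv -big_split; apply: eq_bigr => i _; rewrite !mxE mulrDl. Qed.

Lemma dotvNl u w : dotv (- u) w = - dotv u w.
Proof. by rewrite /dotv -sumrN; apply: eq_bigr => i _; rewrite !mxE mulNr. Qed.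

Lemma dotvZl a u w : dotv (a *: u) w = a * dotv u w.
Proof. by rewrite /dotv mulr_sumr; apply: eq_bigr => i _; rewrite !mxE mulrA. Qed.

Lemma dotvBl u v w : dotv (u - v) w = dotv u w - dotv v w.
Proof. by rewrite dotvDl dotvNl. Qed.

Lemma dotvDr u v w : dotv w (u + v) = dotv w u + dotv w v.
Proof. by rewrite dotvC dotvDl !(dotvC w). Qed.

Lemma dotvNr u w : dotv w (- u) = - dotv w u.
Proof. by rewrite dotvC dotvNl dotvC. Qed.

Lemma dotvBr u v w : dotv w (u - v) = dotv w u - dotv w v.
Proof. by rewrite dotvDr dotvNr. Qed.

Lemma dotvZr a u w : dotv w (a *: u) = a * dotv w u.
Proof. by rewrite dotvC dotvZl dotvC. Qed.

Lemma dotv0r u : dotv u 0 = 0.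
Proof. by rewrite /dotv big1 // => i _; rewrite mxE mulr0. Qed.

Lemma dotvv_ge0 u : 0 <= dotv u u.
Proof. by apply: sumr_ge0 => i _; rewrite -expr2 sqr_ge0. Qed.

Lemma dotvv_eq0 u : (dotv u u == 0) = (u == 0).
Proof.
apply/idP/eqP => [|->]; last by rewrite dotv0r.
rewrite psumr_eq0 => [/allP uu0|i _]; last by rewrite -expr2 sqr_ge0.
apply/rowP => i; rewrite mxE; apply/eqP.
by rewrite -sqrf_eq0 expr2; apply: (implyP (uu0 i (mem_index_enum _))).
Qed.

Lemma dotv_sqr_le u v : dotv u v ^+ 2 <= dotv u u * dotv v v.
Proof.
have [->|v0] := eqVneq v 0; first by rewrite !dotv0r expr0n mulr0.
have vv_gt0 : 0 < dotv v v by rewrite lt_def dotvv_eq0 v0 dotvv_ge0.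
(* [0 <= |c u - b v|^2 = c (a c - b^2)] with [a = <u,u>], [b = <u,v>], [c = <v,v>]. *)
have comb_ge0 := dotvv_ge0 (dotv v v *: u - dotv u v *: v).
rewrite !dotvBl !dotvBr !dotvZl !dotvZr (dotvC v u) in comb_ge0.
rewrite -subr_ge0 -(pmulr_rge0 _ vv_gt0); move: comb_ge0.
set a := dotv u u; set b := dotv u v; set c := dotv v v; lra.
Qed.

Lemma dotv_le_enorm u v : dotv u v <= enorm u * enorm v.
Proof.
rewrite /enorm -sqrtrM ?dotvv_ge0 // (le_trans (ler_norm _)) //.
by rewrite -sqrtr_sqr ler_wsqrtr // dotv_sqr_le.
Qed.

Lemma enorm_ge0 u : 0 <= enorm u.
Proof. exact: sqrtr_ge0. Qed.

Lemma enormN u : enorm (- u) = enorm u.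
Proof. by rewrite /enorm dotvNl dotvNr opprK. Qed.

End Dotv.

Lemma convex_gradient_le (R : realType) (d : nat) (X : set 'rV[R]_d)
    (f : 'rV[R]_d -> R) (gf : 'rV[R]_d -> 'rV[R]_d) x u :
  convex_on X f -> X x -> X u -> has_gradient f gf x ->
  dotv (gf x) (u - x) <= f u - f x.
Proof.
move=> cvx_f Xx Xu [dfx dfxE]; rewrite -dfxE -deriveE //.
apply: (cvgr_to_le (cvg_dnbhs_at_right (diff_derivable dfx))).
near=> t.
have t_gt0 : 0 < t by near: t; exact: nbhs_right_gt.
have t_le1 : t <= 1 by near: t; exact: nbhs_right_le.
have := cvx_f u x t Xu Xx; rewrite (ltW t_gt0) t_le1 => /(_ isT).
rewrite /= /shift -[_ *: (_ - _)]/(_ * _) ler_pdivrMl //.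
have -> : t *: (u - x) + x = t *: u + (1 - t) *: x.
  by rewrite scalerBr scalerBl scale1r -addrA (addrC (- _)).
lra.
Unshelve. all: by end_near.
Qed.

(* Young's inequality [a b <= a^p/p + b^q/q] applied to
   [a = sigma^(1/p) r] and [b = sigma^(-1/p) c], with [q = p/(p-1)]. *)
Lemma young_powR_le (R : realType) (p sigma c r : R) :
  1 < p -> 0 < sigma -> 0 <= c -> 0 <= r ->
  c * r - sigma / p * r `^ p <=
    (p - 1) / p * sigma `^ (- (p - 1)^-1) * c `^ (p / (p - 1)).
Proof.
move=> p_gt1 sigma_gt0 c_ge0 r_ge0.
have p_gt0 : 0 < p by lra.
have pn0 : p != 0 by rewrite gt_eqF.
have p1n0 : p - 1 != 0 by rewrite gt_eqF // subr_gt0.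
set q := p / (p - 1).
have q_gt0 : 0 < q by rewrite divr_gt0 // subr_gt0.
have pq : p^-1 + q^-1 = 1 by rewrite /q invf_div; field.
have s_gt0 : 0 < sigma `^ p^-1 by rewrite powR_gt0.
have sp : sigma `^ p^-1 `^ p = sigma.
  by rewrite -powRrM mulVf // powRr1 // ltW.
have sq : sigma `^ (- p^-1) `^ q = sigma `^ (- (p - 1)^-1).
  by rewrite -powRrM /q mulNr mulrA mulVf // mul1r.
have := conjugate_powR (mulr_ge0 (powR_ge0 sigma p^-1) r_ge0)
  (mulr_ge0 c_ge0 (powR_ge0 sigma (- p^-1))) p_gt0 q_gt0 pq.
rewrite !powRM ?powR_ge0 // sp sq.
have -> : sigma `^ p^-1 * r * (c * sigma `^ (- p^-1)) = c * r.
  by rewrite powRN; field; rewrite gt_eqF.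
have -> : c `^ q * sigma `^ (- (p - 1)^-1) / q =
    (p - 1) / p * sigma `^ (- (p - 1)^-1) * c `^ q.
  by rewrite /q invf_div; ring.
lra.
Qed.

Section LyapunovStep.
Variables (R : realType) (d : nat).
Implicit Types (h : 'rV[R]_d -> R) (gh : 'rV[R]_d -> 'rV[R]_d).

Lemma bregman_three_point h gh u z z' :
  bregman h gh u z' - bregman h gh u z =
    dotv (gh z - gh z') (u - z') - bregman h gh z' z.
Proof. rewrite /bregman !dotvBl !dotvBr; lra. Qed.

Lemma mirror_step_bregman_le h gh (p sigma a : R) (u z z' g : 'rV[R]_d) :
  1 < p -> 0 < sigma -> 0 <= a ->
  sigma / p * enorm (z' - z) `^ p <= bregman h gh z' z ->
  gh z' = gh z - a *: g ->
  bregman h gh u z' - bregman h gh u z <=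
    (p - 1) / p * sigma `^ (- (p - 1)^-1) * a `^ (p / (p - 1))
      * enorm g `^ (p / (p - 1))
    + a * dotv g (u - z).
Proof.
move=> p_gt1 sigma_gt0 a_ge0 unif_h mirror.
rewrite bregman_three_point.
have -> : gh z - gh z' = a *: g by rewrite mirror opprB addrCA subrr addr0.
rewrite dotvZl.
have split_uz' : dotv g (u - z') = dotv g (u - z) + dotv (- g) (z' - z).
  by rewrite dotvNl !dotvBr; ring.
have cauchy_schwarz : a * dotv (- g) (z' - z) <= a * enorm g * enorm (z' - z).
  by rewrite -mulrA ler_wpM2l // -(enormN g) dotv_le_enorm.
have young := young_powR_le p_gt1 sigma_gt0
  (mulr_ge0 a_ge0 (enorm_ge0 g)) (enorm_ge0 (z' - z)).
rewrite powRM ?enorm_ge0 // in young.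
rewrite split_uz'; lra.
Qed.

Lemma coupling_dotv (A0 A1 : R) (g u x y z : 'rV[R]_d) : A1 != 0 ->
  x = (A1 - A0) / A1 *: z + (1 - (A1 - A0) / A1) *: y ->
  (A1 - A0) * dotv g (u - z) = (A1 - A0) * dotv g (u - x) + A0 * dotv g (y - x).
Proof.
move=> A1n0 x_def.
have x_scaled : A1 *: x = (A1 - A0) *: z + A0 *: y.
  rewrite x_def scalerDr !scalerA mulrCA divff // mulr1 mulrBr mulr1.
  by rewrite mulrCA divff // mulr1 opprB addrCA subrr addr0.
have := congr1 (dotv g) x_scaled; rewrite !dotvBr dotvDr !dotvZr => x_dot.
lra.
Qed.

Lemma lyapunov_step (X : set 'rV[R]_d) h gh (f : 'rV[R]_d -> R)
    (gf : 'rV[R]_d -> 'rV[R]_d) (p sigma A0 A1 : R) (u x y z y' z' w : 'rV[R]_d) :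
  1 < p -> 0 < sigma -> 0 < A0 -> A0 <= A1 ->
  sigma / p * enorm (z' - z) `^ p <= bregman h gh z' z ->
  convex_on X f -> X u -> X y -> X w -> has_gradient f gf w ->
  x = (A1 - A0) / A1 *: z + (1 - (A1 - A0) / A1) *: y ->
  gh z' = gh z - (A1 - A0) *: gf w ->
  (bregman h gh u z' + A1 * (f y' - f u))
    - (bregman h gh u z + A0 * (f y - f u)) <=
    (p - 1) / p * sigma `^ (- (p - 1)^-1) * (A1 - A0) `^ (p / (p - 1))
      * enorm (gf w) `^ (p / (p - 1))
    + A1 * (f y' - f w) + A1 * dotv (gf w) (w - x).
Proof.
move=> p_gt1 sigma_gt0 A0_gt0 A01 unif_h cvx_f Xu Xy Xw gf_w coupling mirror.
have a_ge0 : 0 <= A1 - A0 by rewrite subr_ge0.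
have A1n0 : A1 != 0 by rewrite lt0r_neq0 // (lt_le_trans A0_gt0 A01).
have := mirror_step_bregman_le u p_gt1 sigma_gt0 a_ge0 unif_h mirror.
rewrite (coupling_dotv (gf w) u A1n0 coupling) => mirror_bound.
have grad_u := ler_wpM2l a_ge0 (convex_gradient_le cvx_f Xw Xu gf_w).
have grad_y := ler_wpM2l (ltW A0_gt0) (convex_gradient_le cvx_f Xw Xy gf_w).
have split_x v :
    dotv (gf w) (v - x) = dotv (gf w) (v - w) + dotv (gf w) (w - x).
  by rewrite !dotvBr; ring.
rewrite (split_x u) (split_x y) in mirror_bound; lra.
Qed.

End LyapunovStep.

Theorem proposition5 (R : realType) (d : nat) (X : set 'rV[R]_d)
  (p sigma delta : R)
  (h f : 'rV[R]_d -> R) (gh gf : 'rV[R]_d -> 'rV[R]_d) (xstar : 'rV[R]_d)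
  (A : nat -> R) :
  closed X -> convex_set X ->
  2 <= p -> 0 < sigma ->
  convex_on X h -> (forall x, X x -> has_gradient h gh x) ->
  {within X, continuous gh} ->
  (forall x y, X x -> X y ->
     sigma / p * (enorm (x - y)) `^ p <= bregman h gh x y) ->
  convex_on X f -> (forall x, X x -> has_gradient f gf x) ->
  X xstar -> (forall x, X x -> f xstar <= f x) ->
  0 < delta ->
  (forall k, 0 < A k) -> (forall k, A k <= A k.+1) ->
  let alpha := fun k => A k.+1 - A k in
  let tau := fun k => alpha k / A k.+1 in
  (* part (a) *)
  (forall (x y z : nat -> 'rV[R]_d),
     (forall k, X (x k)) -> (forall k, X (y k)) -> (forall k, X (z k)) ->
     (forall k, x k.+1 = tau k *: z k + (1 - tau k) *: y k) ->
     (forall k, gh (z k.+1) = gh (z k) - alpha k *: gf (x k.+1)) ->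
     let E := fun k => bregman h gh xstar (z k) + A k * (f (y k) - f xstar) in
     forall k,
       (E k.+1 - E k) / delta <=
         (p - 1) / p * sigma `^ (- (p - 1)^-1)
           * ((A k.+1 - A k) `^ (p / (p - 1)) / delta)
           * (enorm (gf (x k.+1))) `^ (p / (p - 1))
         + A k.+1 / delta * (f (y k.+1) - f (x k.+1)))
  /\
  (* part (b) *)
  (forall (x y z : nat -> 'rV[R]_d),
     (forall k, X (x k)) -> (forall k, X (y k)) -> (forall k, X (z k)) ->
     (forall k, x k.+1 = tau k *: z k + (1 - tau k) *: y k) ->
     (forall k, gh (z k.+1) = gh (z k) - alpha k *: gf (y k.+1)) ->
     let E := fun k => bregman h gh xstar (z k) + A k * (f (y k) - f xstar) in
     forall k,
       (E k.+1 - E k) / delta <=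
         (p - 1) / p * sigma `^ (- (p - 1)^-1)
           * ((A k.+1 - A k) `^ (p / (p - 1)) / delta)
           * (enorm (gf (y k.+1))) `^ (p / (p - 1))
         + A k.+1 / delta * dotv (gf (y k.+1)) (y k.+1 - x k.+1)).
Proof.
(* Neither the minimality of [xstar] nor the closedness/convexity of [X] and the
   regularity of [h] enter the one-step estimate. *)
move=> _ _ p_ge2 sigma_gt0 _ _ _ unif_h cvx_f grad_f Xxstar _ delta_gt0 A_gt0 A_le.
move=> alpha tau.
have p_gt1 : 1 < p by apply: lt_le_trans p_ge2; rewrite ltr1n.
have div_delta K Q G B W L :
    L <= K * Q * G + B * W -> L / delta <= K * (Q / delta) * G + B / delta * W.
  have -> : K * (Q / delta) * G + B / delta * W = (K * Q * G + B * W) / delta.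
    by ring.
  by rewrite ler_pM2r ?invr_gt0.
split=> x y z Xx Xy Xz coupling mirror E k; apply: div_delta; rewrite /E.
- have := lyapunov_step (y k.+1) p_gt1 sigma_gt0 (A_gt0 k) (A_le k)
    (unif_h _ _ (Xz k.+1) (Xz k)) cvx_f Xxstar (Xy k) (Xx k.+1)
    (grad_f _ (Xx k.+1)) (coupling k) (mirror k).
  by rewrite subrr dotv0r mulr0 addr0.
- have := lyapunov_step (y k.+1) p_gt1 sigma_gt0 (A_gt0 k) (A_le k)
    (unif_h _ _ (Xz k.+1) (Xz k)) cvx_f Xxstar (Xy k) (Xy k.+1)
    (grad_f _ (Xy k.+1)) (coupling k) (mirror k).
  by rewrite subrr mulr0 addr0.
Qed.
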